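(* Let $H=(V,E)$ be an $n$-uniform hypergraph, $r\ge 2$, and $k\ge 1$. The number of sequences $(C_1,\dots,C_k)$ of edges of $H$ for which there exist an injective $\sigma:V\to[0,1)$ and a color $i\in\{k,\dots,r\}$ such that $(C_1,\dots,C_k)$ is an ordered $k$-chain for color $i$ is at most $2\binom{|E|}{k}$.
   Context: Setting: $n\ge 3$, $r\ge2$ integers, $H=(V,E)$ an $n$-uniform hypergraph, colors $\{1,\dots,r\}$. Put $p=\frac{r-1}{r}\cdot\frac{\ln(n/\ln n)}{n}$. Partition $[0,1)$ into consecutive half-open intervals $\Delta_1,\delta_1,\Delta_2,\delta_2,\dots,\delta_{r-1},\Delta_r$ (left to right), $\Delta_i=\big[(i-1)(\tfrac{1-p}{r}+\tfrac{p}{r-1}),\ i\tfrac{1-p}{r}+(i-1)\tfrac{p}{r-1}\big)$, $\delta_i=\big[i\tfrac{1-p}{r}+(i-1)\tfrac{p}{r-1},\ i(\tfrac{1-p}{r}+\tfrac{p}{r-1})\big)$. For injective $\sigma:V\to[0,1)$, a vertex $v$ belongs to interval $I$ if $\sigma(v)\in I$; the first (last) vertex of a vertex set is its vertex of smallest (largest) weight. Algorithm 1: every vertex in $\Delta_i$ gets color $i$; then vertices in $\bigcup_i\delta_i$ are processed in increasing weight order, and $v\in\delta_i$ gets color $i$ unless some edge containing $v$ has all its other vertices already colored $i$, in which case $v$ gets color $i+1$; the result is $C^0$. For $1\le k\le i\le r$, a sequence $(C_1,\dots,C_k)$ of edges is an ordered $k$-chain for color $i$ if: (a) the first vertex of $C_1$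 lies in $\Delta_{i-k+1}$; (b) for each $j=1,\dots,k-1$, the last vertex of $C_j$ equals the first vertex of $C_{j+1}$, lies in $\delta_{i-k+j}$, and all vertices of $C_j$ other than its last vertex have color $i-k+j$ in $C^0$; (c) all vertices of $C_k$ have color $i$ in $C^0$. *)

From HB Require Import structures.
From mathcomp Require Import all_boot all_order all_algebra.
From mathcomp Require Import reals exp.
Set Implicit Arguments. Unset Strict Implicit. Unset Printing Implicit Defensive.
Import Order.TTheory GRing.Theory Num.Theory.
Local Open Scope ring_scope.

Section Coloring.
Variables (R : realType) (V : finType) (E : {set {set V}}) (n r : nat)
  (sigma : V -> R).

Definition pp : R := ((r%:R - 1) / r%:R) * (ln (n%:R / ln n%:R) / n%:R).
Definition aa : R := (1 - pp) / r%:R.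
Definition bb : R := pp / (r%:R - 1).

Definition inDelta (i : nat) (x : R) : bool :=
  ((i%:R - 1) * (aa + bb) <= x) && (x < i%:R * aa + (i%:R - 1) * bb).
Definition indelta (i : nat) (x : R) : bool :=
  (i%:R * aa + (i%:R - 1) * bb <= x) && (x < i%:R * (aa + bb)).

Definition Delta_index (v : V) : nat :=
  head 0%N [seq i <- iota 1 r | inDelta i (sigma v)].
Definition delta_index (v : V) : nat :=
  head 0%N [seq i <- iota 1 r.-1 | indelta i (sigma v)].
Definition in_some_delta (v : V) : bool :=
  has (fun i => indelta i (sigma v)) (iota 1 r.-1).

(* Colour 0 means "not yet coloured".  Step 1 of Algorithm 1:
   vertices in Delta_i get colour i. *)
Definition color_init : V -> nat := Delta_index.

Definition color_step (c : V -> nat) (v : V) : V -> nat :=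
  let i := delta_index v in
  let ci := if [exists e in E, (v \in e) &&
                  [forall u in e, (u != v) ==> (c u == i)]]
            then i.+1 else i in
  fun u => if u == v then ci else c u.

Definition delta_order : seq V :=
  sort (fun u v => sigma u <= sigma v) [seq v <- enum V | in_some_delta v].

Definition C0 : V -> nat := foldl color_step color_init delta_order.

Definition isFirst (C : {set V}) (v : V) : bool :=
  (v \in C) && [forall u in C, sigma v <= sigma u].
Definition isLast (C : {set V}) (v : V) : bool :=
  (v \in C) && [forall u in C, sigma u <= sigma v].

(* (C_1,...,C_k) = C (with C_j = nth set0 C (j-1)) is an ordered k-chain
   for colour i, k = size C *)
Definition ordered_chain (C : seq {set V}) (i : nat) : Prop :=
  let k := size C in
  [/\ (1 <= k <= i)%N, (i <= r)%N,
   (exists v, isFirst (nth set0 C 0) v && inDelta (i - k + 1)%N (sigma v)),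
   (forall j, (1 <= j <= k.-1)%N ->
      exists v, [/\ isLast (nth set0 C j.-1) v, isFirst (nth set0 C j) v,
                    indelta (i - k + j)%N (sigma v) &
                    forall u, u \in nth set0 C j.-1 -> u != v ->
                              C0 u = (i - k + j)%N])
   & forall u, u \in nth set0 C k.-1 -> C0 u = i].

End Coloring.

From HB Require Import structures.
From mathcomp Require Import all_boot all_order all_algebra.
From mathcomp Require Import reals exp.
From mathcomp Require Import zify.
Import Order.TTheory GRing.Theory Num.Theory.
Set Implicit Arguments. Unset Strict Implicit. Unset Printing Implicit Defensive.

(* Along an ordered chain for colour i every vertex of the j-th edge has
   colour i - k + j or i - k + j + 1 in C^0 (only the vertex shared with the
   next edge can carry the larger colour).  Hence
   edges two or more steps apart are disjoint, while consecutive edges meet: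
   the edges form an induced path of the intersection graph.  An induced path
   is recovered from its vertex set and the choice of which of its two ends
   comes first, so there are at most 2 * 'C(#|E|, k) chains of length k. *)

(* [size s] may occur at different but convertible types, which [lia] would
   treat as distinct atoms. *)
Ltac size_lia :=
  repeat match goal with H : context [size _] |- _ => revert H end;
  repeat match goal with |- context [size ?s] =>
    let m := fresh "m" in set m := size s; clearbody m end;
  intros; lia.

Section InducedPaths.
Variables (T : finType) (x0 : T) (M : rel T).

Definition induced_path (s : seq T) : Prop :=
  uniq s /\
  forall j l, j < size s -> l < size s -> j != l ->
    M (nth x0 s j) (nth x0 s l) = (l == j.+1) || (j == l.+1).

Definition at_most_one_nbr (s : seq T) (x : T) : Prop :=
  forall y z, y \in s -> z \in s -> y != x -> z != x -> M x y -> M x z -> y = z.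

Definition orientation (s : seq T) : bool :=
  enum_rank (head x0 s) <= enum_rank (last x0 s).

Lemma head_rev (s : seq T) : head x0 (rev s) = last x0 s.
Proof. by case/lastP: s => // s y; rewrite rev_rcons last_rcons. Qed.

Lemma last_rev (s : seq T) : last x0 (rev s) = head x0 s.
Proof. by rewrite -[in RHS](revK s) head_rev. Qed.

Lemma induced_path_rev (s : seq T) : induced_path s -> induced_path (rev s).
Proof.
move=> [us adj]; split; first by rewrite rev_uniq.
by move=> j l; rewrite size_rev => hj hl hjl; rewrite !nth_rev // adj; lia.
Qed.

Section OnePath.
Variable s : seq T.
Hypothesis s_path : induced_path s.

Lemma induced_path_nbr j y : j < size s -> y \in s -> y != nth x0 s j ->
  M (nth x0 s j) y -> exists2 l, l < size s & y = nth x0 s l /\ (l = j.+1 \/ j = l.+1).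
Proof.
move=> hj /(nthP x0) [l hl <-] hne; have [_ adj] := s_path.
have hjl : j != l by apply: contra hne => /eqP ->.
by rewrite adj // => /orP [] /eqP e; exists l => //; split=> //; [left | right].
Qed.

Lemma induced_path_head_nbr : at_most_one_nbr s (head x0 s).
Proof.
have [/size0nil s0 | s_gt0] := posnP (size s); first by move=> y; rewrite s0.
move=> y z hy hz hyh hzh; rewrite -nth0 in hyh hzh * => hMy hMz.
have [ly _ [-> [-> | //]]] := induced_path_nbr s_gt0 hy hyh hMy.
by have [lz _ [-> [-> | //]]] := induced_path_nbr s_gt0 hz hzh hMz.
Qed.

Lemma induced_path_end x : x \in s -> at_most_one_nbr s x ->
  x = head x0 s \/ x = last x0 s.
Proof.
have [us adj] := s_path.
move=> /(nthP x0) [j hj <-] one; rewrite -nth0 -nth_last.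
have [-> | j_gt0] := posnP j; first by left.
have [hjs | hjs] := ltnP j.+1 (size s); last first.
  by right; rewrite (_ : j = (size s).-1) //; size_lia.
have : nth x0 s j.-1 = nth x0 s j.+1.
  by apply: one; rewrite ?mem_nth ?nth_uniq ?adj //; size_lia.
by move/eqP; rewrite nth_uniq //; size_lia.
Qed.

End OnePath.

Lemma induced_path_eq_head (s t : seq T) : induced_path s -> induced_path t ->
  s =i t -> head x0 s = head x0 t -> s = t.
Proof.
move=> s_path [ut adj_t] st hd; have [us _] := s_path.
have sz : size s = size t by apply/perm_size/uniq_perm.
suff eq_nth j : nth x0 s j = nth x0 t j.
  by apply: (eq_from_nth sz) => j _; apply: eq_nth.
elim/ltn_ind: j => j IH.
have [hj | hj] := ltnP j (size s); last by rewrite !nth_default -?sz.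
case: j IH hj => [_ _ | j IH hj]; first by rewrite !nth0.
have t_uniq a b : a < size s -> b < size s -> (nth x0 t a == nth x0 t b) = (a == b).
  by move=> ha hb; rewrite nth_uniq -?sz.
have t_in : nth x0 t j.+1 \in s by rewrite st mem_nth -?sz.
have t_ne : nth x0 t j.+1 != nth x0 s j by rewrite IH // t_uniq //; size_lia.
have t_adj : M (nth x0 s j) (nth x0 t j.+1).
  by rewrite IH // adj_t ?eqxx -?sz //; size_lia.
have [l hl [t_eq [l_eq | j_eq]]] := induced_path_nbr s_path (ltnW hj) t_in t_ne t_adj.
  by rewrite t_eq l_eq.
have : nth x0 t j.+1 = nth x0 t l by rewrite t_eq IH //; size_lia.
by move/eqP; rewrite t_uniq //; size_lia.
Qed.

Lemma rev_id_of_orientation (s : seq T) : uniq s ->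
  orientation (rev s) = orientation s -> rev s = s.
Proof.
rewrite /orientation head_rev last_rev => us o.
have /val_inj/enum_rank_inj head_last : val (enum_rank (head x0 s)) = enum_rank (last x0 s).
  move: o; set a := val _; set b := val _ => o.
  by have := leq_total a b; rewrite -o orbb => ba; apply/eqP; rewrite eqn_leq -o ba.
case: s us head_last {o} => [|x [|y s]] //= /andP [x_notin _] x_last.
by move: x_notin; rewrite x_last mem_last.
Qed.

Lemma induced_path_inj (s t : seq T) : induced_path s -> induced_path t ->
  s =i t -> orientation s = orientation t -> s = t.
Proof.
move=> s_path t_path st ot.
case: t t_path st ot => [_ st _ | y t t_path st ot].
  by case: s st {s_path} => // x s /(_ x); rewrite mem_head.
have t_end : at_most_one_nbr s (head x0 (y :: t)).
  by move=> u v; rewrite !st; apply: induced_path_head_nbr.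
have y_in : y \in s by rewrite st mem_head.
have [hd | hd] := induced_path_end s_path y_in t_end.
  exact: induced_path_eq_head.
have t_rev : y :: t = rev s.
  apply: induced_path_eq_head t_path (induced_path_rev s_path) _ _.
    by move=> u; rewrite mem_rev st.
  by rewrite head_rev.
by rewrite t_rev rev_id_of_orientation // ?(proj1 s_path) // -t_rev.
Qed.

Lemma card_induced_paths k (A : {set T}) (S : {set k.-tuple T}) :
  (forall s, s \in S -> induced_path s /\ {subset s <= A}) ->
  #|S| <= 2 * 'C(#|A|, k).
Proof.
move=> hS; pose f (s : k.-tuple T) := ([set x in (s : seq T)], orientation s).
have f_inj : {in S &, injective f}.
  move=> s t /hS [s_path _] /hS [t_path _] [/setP st ot]; apply: val_inj.
  by apply: induced_path_inj => // x; move: (st x); rewrite !inE.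
have f_sub : f @: S \subset setX [set B : {set T} | B \subset A & #|B| == k] setT.
  apply/subsetP => _ /imsetP [s /hS [[us _] sA] ->]; rewrite !inE andbT.
  apply/andP; split; first by apply/subsetP => x; rewrite inE; apply: sA.
  by rewrite cardsE (card_uniqP us) size_tuple.
rewrite -(card_in_imset f_inj) mulnC.
by rewrite -[X in _ * X]card_bool -cardsT -cards_draws -cardsX subset_leq_card.
Qed.

End InducedPaths.

Section ColoredChains.
Variables (R : realType) (V : finType) (sigma : V -> R) (c : V -> nat) (b : nat).
Hypothesis sigma_inj : injective sigma.

Lemma first_last_card (X : {set V}) v :
  isFirst sigma X v -> isLast sigma X v -> #|X| <= 1.
Proof.
move=> /andP [_ /forall_inP v_first] /andP [_ /forall_inP v_last].
rewrite -(cards1 v); apply/subset_leq_card/subsetP => u hu.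
by rewrite inE; apply/eqP/sigma_inj/le_anti; rewrite v_first ?v_last.
Qed.

Definition colored_chain (C : seq {set V}) : Prop :=
  [/\ forall j, j < size C -> 1 < #|nth set0 C j|,
      forall j, j.+1 < size C -> exists v,
        [/\ isLast sigma (nth set0 C j) v, isFirst sigma (nth set0 C j.+1) v &
            forall u, u \in nth set0 C j -> u != v -> c u = b + j]
    & forall u, u \in nth set0 C (size C).-1 -> c u = b + (size C).-1].

Variable C : seq {set V}.
Hypothesis C_chain : colored_chain C.

Lemma colored_chain_color j x : j < size C -> x \in nth set0 C j ->
  c x = b + j \/ c x = b + j.+1.
Proof.
have [big link last_col] := C_chain; move=> hj hx.
have [hj1 | hj1] := ltnP j.+1 (size C); last first.
  by left; rewrite last_col (_ : (size C).-1 = j) //; size_lia.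
have [v [_ v_first v_col]] := link j hj1.
have [x_v | /(v_col x hx) ->] := eqVneq x v; last by left.
right; subst x.
have [hj2 | hj2] := ltnP j.+2 (size C); last first.
  have v_in : v \in nth set0 C j.+1 by case/andP: v_first.
  by rewrite last_col (_ : (size C).-1 = j.+1) //; size_lia.
have [w [w_last _ w_col]] := link j.+1 hj2.
have [v_w | v_ne_w] := eqVneq v w; last by rewrite w_col //; case/andP: v_first.
by have := first_last_card v_first; rewrite v_w => /(_ w_last); have := big _ hj1; lia.
Qed.

Lemma colored_chain_meetE j l : j < l < size C ->
  (nth set0 C j :&: nth set0 C l != set0) = (l == j.+1).
Proof.
move=> /andP [jl hl]; have [_ link _] := C_chain.
have [l_eq | l_ne] := eqVneq l j.+1.
  subst l; have [v [/andP [vj _] /andP [vl _] _]] := link j hl.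
  by apply/set0Pn; exists v; rewrite inE vj.
apply/negbTE/negPn/eqP/setP => x; rewrite !inE; apply/negbTE/andP => -[xj xl].
have := colored_chain_color (ltn_trans jl hl) xj.
have := colored_chain_color hl xl; size_lia.
Qed.

Lemma colored_chain_neq j l : j < l < size C -> nth set0 C j != nth set0 C l.
Proof.
move=> /andP [jl hl]; have [big link _] := C_chain.
apply/eqP => C_jl; have [l_eq | l_ne] := eqVneq l j.+1.
  subst l; have [v [v_last v_first _]] := link j hl; rewrite -C_jl in v_first.
  by have := first_last_card v_first v_last; have := big j (ltnW hl); lia.
have /card_gt0P [x xj] : 0 < #|nth set0 C j| by have := big j (ltn_trans jl hl); lia.
have : nth set0 C j :&: nth set0 C l != set0.
  by apply/set0Pn; exists x; rewrite -C_jl setIid.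
by rewrite colored_chain_meetE ?jl // (negbTE l_ne).
Qed.

Lemma colored_chain_induced_path :
  induced_path set0 (fun X Y : {set V} => X :&: Y != set0) C.
Proof.
split.
  apply/(uniqP set0) => j l; rewrite !inE => hj hl C_jl.
  case: (ltngtP j l) => // [jl | lj].
    by move: (@colored_chain_neq j l); rewrite jl hl C_jl eqxx => /(_ isT).
  by move: (@colored_chain_neq l j); rewrite lj hj C_jl eqxx => /(_ isT).
move=> j l hj hl j_ne_l; case: (ltngtP j l) j_ne_l => // [jl | lj] _.
  rewrite colored_chain_meetE ?jl // (_ : j == l.+1 = false) ?orbF //.
  by apply/negbTE/eqP; lia.
rewrite setIC colored_chain_meetE ?lj // (_ : l == j.+1 = false) //.
by apply/negbTE/eqP; lia.
Qed.

End ColoredChains.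

Lemma ordered_chain_colored (R : realType) (V : finType) (E : {set {set V}})
    (n r : nat) (sigma : V -> R) (C : seq {set V}) (i : nat) :
  (forall e, e \in C -> 1 < #|e|) -> ordered_chain E n r sigma C i ->
  colored_chain sigma (C0 E n r sigma) (i - size C).+1 C.
Proof.
move=> big [/andP [C_gt0 C_le] _ _ link last_col]; split.
- by move=> j hj; apply/big/mem_nth.
- move=> j hj; have [|v [v_last v_first _ v_col]] := link j.+1; first by size_lia.
  by exists v; split=> // u hu hne; rewrite v_col //; size_lia.
- by move=> u hu; rewrite last_col //; size_lia.
Qed.

Local Open Scope ring_scope.

Theorem lemma1 (R : realType) (V : finType) (E : {set {set V}}) (n r k : nat)
  (hn : (3 <= n)%N) (hr : (2 <= r)%N) (hk : (1 <= k)%N)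
  (huni : forall e, e \in E -> #|e| = n)
  (S : {set k.-tuple {set V}})
  (hS : forall C, C \in S ->
     (forall e, e \in C -> e \in E) /\
     exists sigma : V -> R,
       [/\ injective sigma, (forall v, 0 <= sigma v < 1) &
           exists i, (k <= i <= r)%N /\ ordered_chain E n r sigma C i]) :
  (#|S| <= 2 * 'C(#|E|, k))%N.
Proof.
apply: (@card_induced_paths _ set0 (fun X Y : {set V} => X :&: Y != set0)).
move=> C /hS [C_sub [sigma [sigma_inj _ [i [_ chain]]]]]; split=> //.
apply: (colored_chain_induced_path sigma_inj (ordered_chain_colored _ chain)).
by move=> e /C_sub /huni ->; lia.
Qed.
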